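(* Let $k\ge3$ and let $G=(V,E)$ be a connected $k$-uniform hypergraph (with $E\neq\emptyset$). (i) A nonzero vector $\mathbf x\in\mathbb C^n$ is an eigenvector of the Laplacian tensor $\mathcal D-\mathcal A$ corresponding to the eigenvalue $0$ if and only if there exist $\gamma\in\mathbb C\setminus\{0\}$ and integers $\alpha_i$ ($i\in[n]$) such that $x_i=\gamma\exp(\frac{2\alpha_i\pi}{k}\sqrt{-1})$ for all $i\in[n]$ and, for every edge $e\in E$, $\sum_{j\in e}\alpha_j=\sigma_e k$ for some integer $\sigma_e$. (ii) A nonzero vector $\mathbf x\in\mathbb C^n$ is an eigenvector of the signless Laplacian tensor $\mathcal D+\mathcal A$ corresponding to the eigenvalue $0$ if and only if there exist $\gamma\in\mathbb C\setminus\{0\}$ and integers $\alpha_i$ ($i\in[n]$) such that $x_i=\gamma\exp(\frac{2\alpha_i\pi}{k}\sqrt{-1})$ for all $i\in[n]$ and, for every edge $e\in E$, $\sum_{j\in e}\alpha_j=\sigma_e k+\frac{k}{2}$ for some integer $\sigma_e$.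
   Context: A $k$-uniform hypergraph $G=(V,E)$ has vertex set $V=[n]$ ($n\ge k$) and edge set $E$ of $k$-element subsets of $V$; $E_i=\{e\in E:i\in e\}$, $d_i=|E_i|$. $G$ is connected if every two distinct vertices $i,j$ are joined by a sequence of edges $e_1,\dots,e_m$ with $i\in e_1$, $j\in e_m$, $e_r\cap e_{r+1}\neq\emptyset$. The adjacency tensor $\mathcal A$ has $a_{i_1\dots i_k}=\frac1{(k-1)!}$ if $\{i_1,\dots,i_k\}\in E$, else $0$; $\mathcal D$ is diagonal with $d_{i\dots i}=d_i$. Thus $((\mathcal D\pm\mathcal A)\mathbf x^{k-1})_i=d_ix_i^{k-1}\pm\sum_{e\in E_i}\prod_{j\in e\setminus\{i\}}x_j$. A nonzero $\mathbf x\in\mathbb C^n$ is an eigenvector of a tensor $\mathcal T$ for eigenvalue $\lambda$ if $(\mathcal T\mathbf x^{k-1})_i=\lambda x_i^{k-1}$ for all $i\in[n]$, where $(\mathcal T\mathbf x^{k-1})_i=\sum_{i_2,\dots,i_k}t_{ii_2\dots i_k}x_{i_2}\cdots x_{i_k}$. *)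

(* Complex numbers are modelled by an arbitrary
   numeric algebraically closed field C (e.g. the complex numbers). *)
From HB Require Import structures.
From mathcomp Require Import all_boot all_order all_algebra.
Set Implicit Arguments. Unset Strict Implicit. Unset Printing Implicit Defensive.
Import Order.TTheory GRing.Theory Num.Theory.
Local Open Scope ring_scope.

Definition kuniform n (k : nat) (E : {set {set 'I_n}}) : Prop :=
  forall e, e \in E -> #|e| = k.

Definition hconnected n (E : {set {set 'I_n}}) : Prop :=
  forall i j : 'I_n, i != j ->
    exists (e1 : {set 'I_n}) (s : seq {set 'I_n}),
      [/\ all (fun e => e \in E) (e1 :: s), i \in e1, j \in last e1 s &
          path (fun a b => a :&: b != set0) e1 s].

(* A tensor of order k and dimension n: entries indexed by index sequences
   (only sequences of length k are relevant). *)
Definition tensor (C : Type) n := seq 'I_n -> C.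

Definition tapply (C : numClosedFieldType) n (k : nat) (T : tensor C n)
    (x : 'I_n -> C) (i : 'I_n) : C :=
  \sum_(t : (k.-1).-tuple 'I_n) T (i :: val t) * \prod_(j <- val t) x j.

Definition is_eigenvector (C : numClosedFieldType) n (k : nat) (T : tensor C n)
    (x : 'I_n -> C) (lam : C) : Prop :=
  (exists i, x i != 0) /\ forall i, tapply k T x i = lam * x i ^+ k.-1.

Definition adj_tensor (C : numClosedFieldType) n (k : nat)
    (E : {set {set 'I_n}}) : tensor C n :=
  fun t => if (size t == k) && ([set j in t] \in E)
           then ((k.-1)`!%:R)^-1 else 0.

Definition hdeg n (E : {set {set 'I_n}}) (i : 'I_n) : nat :=
  #|[set e in E | i \in e]|.

Definition deg_tensor (C : numClosedFieldType) n (k : nat)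
    (E : {set {set 'I_n}}) : tensor C n :=
  fun t => match t with
           | i :: r => if (size t == k) && all (fun j => j == i) r
                       then (hdeg E i)%:R else 0
           | [::] => 0
           end.

Definition laplacian (C : numClosedFieldType) n k E : tensor C n :=
  fun t => deg_tensor C k E t - adj_tensor C k E t.
Definition signless_laplacian (C : numClosedFieldType) n k E : tensor C n :=
  fun t => deg_tensor C k E t + adj_tensor C k E t.

(* exp(2 a pi sqrt(-1) / k) for integer a: k.-root (-1) = exp(pi sqrt(-1)/k)
   (the k-th root of -1 of minimal nonnegative argument). *)
Definition expik (C : numClosedFieldType) (k : nat) (a : int) : C :=
  ((k.-root (-1 : C)) ^+ 2) ^ a.

From HB Require Import structures.
From mathcomp Require Import all_boot all_order all_algebra.
From mathcomp Require Import cyclic separable cyclotomic ring.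
Import Order.TTheory GRing.Theory Num.Theory.
Set Implicit Arguments. Unset Strict Implicit. Unset Printing Implicit Defensive.
Local Open Scope ring_scope.

(* After evaluating the tensors, x is a 0-eigenvector of D - A (resp. D + A)
   iff it satisfies the balance equations
       s * sum_(e in E_i) prod_(j in e \ i) x_j = d_i x_i^(k-1)     (all i)
   with s = 1 (resp. s = -1).  Taking a vertex of maximal modulus, the
   equality case of the triangle inequality and connectivity show that all
   |x_i| and then all x_i^k are equal, so x_i = g omega^(a_i) with omega a
   primitive k-th root of unity and omega^(sum_e a) = s on every edge; the
   converse is a direct computation.  It remains to identify
   omega = expik k 1 = y^2 with y = k.-root (-1): the principal root y is a
   primitive 2k-th root of unity, which is proved by a descent on the unit
   circle (every 2k-th root of unity is reached from 1 by rotations by y).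
   Then omega^a = 1 iff k | a, and omega^a = -1 iff a = s k + k/2. *)

Lemma norm_unity_root (R : numDomainType) (w : R) m :
  (0 < m)%N -> w ^+ m = 1 -> `|w| = 1.
Proof.
move=> m_gt0 wm1; have /eqP := congr1 Num.norm wm1.
by rewrite normrX normr1 pexpr_eq1 // => /eqP.
Qed.

Lemma conj_unitK (C : numClosedFieldType) (w : C) : `|w| = 1 -> w^* * w = 1.
Proof. by move=> nw; rewrite mulrC -normCK nw expr1n. Qed.

Lemma Re_unit_lt1 (C : numClosedFieldType) (u : C) :
  `|u| = 1 -> u != 1 -> 'Re u < 1.
Proof.
move=> nu u1; have [le eq] := leif_Re_Creal u; rewrite nu in le eq.
rewrite lt_neqAle le andbT eq; apply: contra u1 => u_ge0.
by rewrite -(ger0_norm u_ge0) nu.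
Qed.

(* Coordinates of rotations: if (a, b) and (c, d) are points of the upper unit
   half-circle with c <= a < 1, then rotating (c, d) clockwise by the angle of
   (a, b) strictly increases its abscissa and stays in the upper half-plane. *)
Lemma half_circle_rotation (R : numDomainType) (a b c d : R) :
  a \is Num.real -> c \is Num.real ->
  a ^+ 2 + b ^+ 2 = 1 -> c ^+ 2 + d ^+ 2 = 1 -> 0 <= b -> 0 <= d ->
  a < 1 -> c <= a -> c < c * a + d * b /\ 0 <= a * d - c * b.
Proof.
move=> ra rc hab hcd b_ge0 d_ge0 a_lt1 c_le_a.
have b2 : b ^+ 2 = 1 - a ^+ 2 by rewrite -hab; ring.
have d2 : d ^+ 2 = 1 - c ^+ 2 by rewrite -hcd; ring.
(* ordinates are compared through the squares of the abscissae *)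
have sqr_le (x y : R) : 0 <= x -> 0 <= y -> x ^+ 2 <= y ^+ 2 -> x <= y.
  by move=> x0 y0; rewrite ler_sqr.
have [c_ge0|c_lt0] := real_ge0P rc.
  have a_ge0 : 0 <= a := le_trans c_ge0 c_le_a.
  have b_le_d : b <= d.
    by apply: sqr_le => //; rewrite b2 d2 lerD2l lerN2 ler_sqr ?nnegrE.
  split; last by rewrite subr_ge0 (@le_trans _ _ (c * d)) ?ler_wpM2l ?ler_wpM2r.
  rewrite -subr_gt0.
  have -> : c * a + d * b - c = d * b - c * (1 - a) by ring.
  have b_sqr : b * b - a * (1 - a) = 1 - a by rewrite -expr2 b2; ring.
  apply: (@lt_le_trans _ _ (b * b - a * (1 - a))).
    by rewrite b_sqr subr_gt0.
  by rewrite lerB ?ler_wpM2r // subr_ge0 ltW.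
split.
  rewrite -subr_gt0.
  have -> : c * a + d * b - c = d * b + (- c) * (1 - a) by ring.
  by rewrite ltr_wpDl ?mulr_ge0 // mulr_gt0 ?oppr_gt0 ?subr_gt0.
have [a_ge0|a_lt0] := real_ge0P ra.
  by rewrite addr_ge0 ?mulr_ge0 // -mulNr mulr_ge0 // oppr_ge0 ltW.
have d_le_b : d <= b.
  apply: sqr_le => //; rewrite b2 d2 lerD2l lerN2 -sqrrN -(sqrrN c).
  by rewrite ler_sqr ?nnegrE ?oppr_ge0 ?lerN2 // ltW.
have -> : a * d - c * b = (- c) * b - (- a) * d by ring.
rewrite subr_ge0 (@le_trans _ _ ((- a) * b)) // ?ler_wpM2r ?lerN2 //.
by rewrite ler_wpM2l // oppr_ge0 ltW.
Qed.

Lemma rotate_by_conj (C : numClosedFieldType) (u v : C) :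
  `|u| = 1 -> `|v| = 1 -> 0 <= 'Im u -> 0 <= 'Im v -> 'Re u < 1 ->
  'Re v <= 'Re u -> 'Re v < 'Re (v * u^*) /\ 0 <= 'Im (v * u^*).
Proof.
move=> nu nv Imu Imv Reu vu.
have unit_circle (w : C) : `|w| = 1 -> 'Re w ^+ 2 + 'Im w ^+ 2 = 1.
  by move=> nw; rewrite -normC2_Re_Im nw expr1n.
rewrite ReM ImM Re_conj Im_conj !mulrN opprK [- _ + _]addrC.
by have := half_circle_rotation (Creal_Re u) (Creal_Re v)
  (unit_circle u nu) (unit_circle v nv) Imu Imv Reu vu.
Qed.

(* A numeric closed field has primitive roots of unity of every positive
   order: the n distinct roots of the separable polynomial X^n - 1 contain
   one. *)
Lemma prim_root_exists (C : numClosedFieldType) n :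
  (0 < n)%N -> exists z : C, n.-primitive_root z.
Proof.
move=> n_gt0; have [r Dp] := closed_field_poly_normal ('X^n - 1 : {poly C}).
rewrite (monicP (monicXnsubC 1 n_gt0)) scale1r in Dp.
have unity_r : all n.-unity_root r.
  by apply/allP => z; rewrite -root_prod_XsubC -Dp.
have uniq_r : uniq r.
  by rewrite -separable_prod_XsubC -Dp separable_Xn_sub_1 // pnatr_eq0 -lt0n.
have size_r : size r = n.
  by apply: succn_inj; rewrite -(size_prod_XsubC r id) -Dp size_XnsubC.
have /hasP[z _ z_prim] := has_prim_root n_gt0 unity_r uniq_r (eq_leq (esym size_r)).
by exists z.
Qed.

Section PrincipalRootOfMinusOne.
Variables (C : numClosedFieldType) (k : nat).
Hypothesis k_gt1 : (1 < k)%N.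
Local Notation y := (k.-root (-1 : C)).
Local Notation N := (2 * k)%N.

Let k_gt0 : (0 < k)%N := ltnW k_gt1.
Let N_gt0 : (0 < N)%N. Proof. by rewrite muln_gt0. Qed.

Lemma rootN1_expk : y ^+ k = -1. Proof. exact: rootCK. Qed.

Lemma rootN1_exp2k : y ^+ N = 1.
Proof. by rewrite mulnC exprM rootN1_expk sqrrN expr1n. Qed.

Lemma norm_rootN1 : `|y| = 1. Proof. exact: norm_unity_root N_gt0 rootN1_exp2k. Qed.

Lemma rootN1_neq1 : y != 1.
Proof.
apply/eqP => y1; have := rootN1_expk; rewrite y1 expr1n => /eqP.
by rewrite eq_sym eqNr oner_eq0.
Qed.

(* Among the 2k-th roots of unity w != 1 of the upper half-plane, y has the
   largest real part: either w^k = -1 and this is the defining property of y,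
   or w^k = 1 and rotating y back by the angle of w would give a k-th root of
   -1 with larger real part than y. *)
Lemma Re_unity_root_le_rootN1 w :
  w ^+ N = 1 -> w != 1 -> 0 <= 'Im w -> 'Re w <= 'Re y.
Proof.
move=> wN w_neq1 Imw.
have : (w ^+ k) ^+ 2 == 1 by rewrite -exprM mulnC wN.
rewrite sqrf_eq1 => /orP[/eqP wk1|/eqP wkN1]; last exact: rootC_Re_max wkN1 Imw.
have [//|y_lt_w] := real_leP (Creal_Re w) (Creal_Re y).
have nw := norm_unity_root N_gt0 wN.
have [lt_yw Im_yw] := rotate_by_conj nw norm_rootN1 Imw (Im_rootC_ge0 _ k_gt1)
  (Re_unit_lt1 nw w_neq1) (ltW y_lt_w).
have : (y * w^*) ^+ k = -1 by rewrite exprMn -rmorphXn wk1 rmorph1 mulr1 rootN1_expk.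
by move/(rootC_Re_max k_gt0)/(_ Im_yw)/(lt_le_trans lt_yw); rewrite ltxx.
Qed.

(* Every 2k-th root of unity w is a power of y: for Im w >= 0, repeatedly
   rotate w back by the angle of y; the real part increases strictly, which
   can happen only finitely often among the 2k-th roots of unity (counted
   through a primitive root z), and the process stops at w = 1. *)
Section Descent.
Variable z : C.
Hypothesis z_prim : N.-primitive_root z.

Let above (w : C) := #|[set i : 'I_N | 'Re w < 'Re (z ^+ i)]|.

Lemma upper_unity_root_rootN1_pow m w :
  (above w < m)%N -> w ^+ N = 1 -> 0 <= 'Im w -> exists j, w = y ^+ j.
Proof.
elim: m w => // m IHm w above_w wN Imw.
have [->|w_neq1] := eqVneq w 1; first by exists 0%N.
have nw := norm_unity_root N_gt0 wN.
have [lt_w Im_w'] := rotate_by_conj norm_rootN1 nw (Im_rootC_ge0 _ k_gt1) Imw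
  (Re_unit_lt1 norm_rootN1 rootN1_neq1) (Re_unity_root_le_rootN1 wN w_neq1 Imw).
have w'N : (w * y^*) ^+ N = 1 by rewrite exprMn -rmorphXn rootN1_exp2k rmorph1 mulr1.
have above_w' : (above (w * y^*) < above w)%N.
  have [i0 Dw'] := prim_rootP z_prim w'N.
  apply: proper_card; apply/properP; split.
    by apply/subsetP => i; rewrite !inE; apply: lt_trans.
  by exists i0; rewrite !inE -Dw' ?ltxx.
have [j Dj] := IHm _ (leq_trans above_w' above_w) w'N Im_w'.
by exists j.+1; rewrite exprS mulrC -Dj -mulrA conj_unitK ?mulr1 ?norm_rootN1.
Qed.

Lemma unity_root_rootN1_pow w : w ^+ N = 1 -> exists j, w = y ^+ j.
Proof.
move=> wN; have [Imw|Imw] := real_ge0P (Creal_Im w).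
  exact: upper_unity_root_rootN1_pow (ltnSn _) wN Imw.
(* in the lower half-plane, use that w is the inverse of its conjugate *)
have wcN : w^* ^+ N = 1 by rewrite -rmorphXn wN rmorph1.
have Imwc : 0 <= 'Im w^* by rewrite Im_conj oppr_ge0 ltW.
have [j Dj] := upper_unity_root_rootN1_pow (ltnSn _) wcN Imwc.
exists (j * N.-1)%N.
have yjK : y ^+ (j * N.-1) * y ^+ j = 1.
  by rewrite -exprD -mulnSr prednK // mulnC exprM rootN1_exp2k expr1n.
have := conj_unitK (norm_unity_root N_gt0 wN).
by rewrite Dj => yj_w; rewrite -[w]mul1r -{1}yjK -mulrA yj_w mulr1.
Qed.

End Descent.

(* The order of y is a multiple of the order 2k of a primitive root z, since
   z is a power of y. *)
Lemma rootN1_prim : N.-primitive_root y.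
Proof.
have [z z_prim] := prim_root_exists C N_gt0.
have [m m_prim m_dvdN] := prim_order_exists N_gt0 rootN1_exp2k.
have [j Dz] := unity_root_rootN1_pow z_prim (prim_expr_order z_prim).
have : z ^+ m == 1 by rewrite Dz -exprM mulnC exprM (prim_expr_order m_prim) expr1n.
rewrite -(prim_order_dvd z_prim) => N_dvd_m.
by have -> : N = m by apply/eqP; rewrite eqn_dvd m_dvdN N_dvd_m.
Qed.

End PrincipalRootOfMinusOne.

Lemma prim_exprz_eq1 (R : unitRingType) n (w : R) (z : int) :
  n.-primitive_root w -> (w ^ z == 1) = (n%:Z %| z)%Z.
Proof.
move=> w_prim; rewrite dvdzE /=; case: z => m /=.
  by rewrite -exprnP (prim_order_dvd w_prim).
by rewrite NegzE -exprnN invr_eq1 (prim_order_dvd w_prim).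
Qed.

Lemma prod_exprz (F : fieldType) (I : finType) (P : pred I) (a : I -> int) (w : F) :
  w != 0 -> \prod_(i | P i) w ^ a i = w ^ (\sum_(i | P i) a i).
Proof.
move=> w_neq0; apply: (big_rec2 (fun p s => p = w ^ s)) => [|i p s _ ->].
  by rewrite expr0z.
by rewrite expfzDr.
Qed.

Section ExpIk.
Variables (C : numClosedFieldType) (k : nat).
Hypothesis k_gt1 : (1 < k)%N.
Local Notation y := (k.-root (-1 : C)).

Lemma rootN1_neq0 : y != 0.
Proof. by rewrite -normr_eq0 norm_rootN1 ?oner_eq0. Qed.

Lemma expikE (a : int) : expik C k a = y ^ (2 * a).
Proof. by rewrite /expik exprnP exprz_exp. Qed.

Lemma expik_neq0 (a : int) : expik C k a != 0.
Proof. by rewrite expfz_neq0 // expf_neq0 // rootN1_neq0. Qed.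

Lemma prod_expik (I : finType) (P : pred I) (a : I -> int) :
  \prod_(i | P i) expik C k (a i) = expik C k (\sum_(i | P i) a i).
Proof. by rewrite prod_exprz // expf_neq0 // rootN1_neq0. Qed.

Lemma expik_prim : k.-primitive_root (y ^+ 2).
Proof.
have := dvdn_prim_root (rootN1_prim C k_gt1) (dvdn_mull 2 (dvdnn k)).
by rewrite mulnK // (ltnW k_gt1).
Qed.

Lemma expik_expk (a : int) : expik C k a ^+ k = 1.
Proof.
by rewrite /expik exprnP exprzAC -exprnP (prim_expr_order expik_prim) exp1rz.
Qed.

Lemma expik_eq1 (a : int) : expik C k a = 1 <-> exists s : int, a = s * k%:Z.
Proof.
have /= dvd_k := prim_exprz_eq1 a expik_prim.
split=> [/eqP | /dvdzP k_dvd_a]; first by rewrite dvd_k => /dvdzP.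
by apply/eqP; rewrite /expik dvd_k.
Qed.

Lemma expik_eqN1 (a : int) :
  expik C k a = -1 <->
  exists s : int, (a%:~R : rat) = s%:~R * k%:R + k%:R / 2.
Proof.
(* omega^a = -1 = y^k iff y^(2a - k) = 1 iff 2k | 2a - k *)
have eqN1_shift : (expik C k a == -1) = (y ^ (2 * a - k%:Z) == 1).
  rewrite expikE expfzDr ?rootN1_neq0 // -exprnN (rootN1_expk C k_gt1).
  by rewrite invrN invr1 mulrN1 -eqr_oppLR.
have dvd_shift : expik C k a = -1 <-> ((2 * k)%N%:Z %| 2 * a - k%:Z)%Z.
  by rewrite -(prim_exprz_eq1 _ (rootN1_prim C k_gt1)) -eqN1_shift; split=> /eqP.
apply: (iff_trans dvd_shift); apply: (iff_trans (iff_sym (rwP dvdzP))).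
split=> -[s Ds]; exists s.
  move: Ds => /(congr1 (fun t : int => (t%:~R : rat))).
  rewrite /= intrD intrN !intrM -!pmulrn natrM => Ds.
  have -> : (a%:~R : rat) = ((2%:~R * a%:~R - k%:R) + k%:R) / 2 by field.
  by rewrite Ds; field.
apply: (@intr_inj rat).
by rewrite /= intrD intrN !intrM -!pmulrn natrM Ds; field.
Qed.

End ExpIk.

(* For the latter,
   each edge e containing i is produced by exactly (k-1)! index tuples. *)
Section TensorEvaluation.
Variables (C : numClosedFieldType) (n k : nat) (E : {set {set 'I_n}}).
Hypothesis k_gt0 : (0 < k)%N.

Lemma tapply_deg (x : 'I_n -> C) i :
  tapply k (deg_tensor C k E) x i = (hdeg E i)%:R * x i ^+ k.-1.
Proof.
rewrite /tapply (bigD1 (nseq_tuple k.-1 i)) //= [X in _ + X]big1 ?addr0.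
  rewrite size_nseq prednK // eqxx /= big_nseq iter_mulr_1.
  by rewrite (introT (all_pred1P _ _)) // size_nseq.
move=> t t_neq; rewrite size_tuple prednK // eqxx /=.
case: ifP => [/all_pred1P t_const|]; last by rewrite mul0r.
by case/eqP: t_neq; apply: val_inj; rewrite /= t_const size_tuple.
Qed.

Lemma enum_edge_cons (t : seq 'I_n) i (e : {set 'I_n}) :
  [set j in i :: t] = e -> #|e| = (size t).+1 ->
  [/\ i \notin t, uniq t & [set j in t] = e :\ i].
Proof.
move=> Se ce.
have /= /andP[it ut] : uniq (i :: t) by apply/card_uniqP; rewrite -cardsE Se ce.
split => //; apply/setP => j; rewrite !inE -Se inE in_cons.
by case: eqVneq => [->|] //=; rewrite (negPf it).
Qed.

(* The index tuples t with [set i :: t] = e are the orderings of e :\ i. *)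
Lemma card_edge_enums i (e : {set 'I_n}) : i \in e -> #|e| = k ->
  #|[pred t : (k.-1).-tuple 'I_n | [set j in i :: val t] == e]| = (k.-1)`!.
Proof.
move=> ie ce.
have ce' : #|e :\ i| = k.-1 by move: ce; rewrite (cardsD1 i) ie => <-.
rewrite -ffactnn -ce' -card_uniq_tuples; apply: eq_card => t; rewrite !inE.
apply/eqP/andP => [Se | [t_e ut]].
  have sz : (size t).+1 = k by rewrite size_tuple ce' prednK.
  have [_ ut S'] := enum_edge_cons Se (etrans ce (esym sz)).
  split=> //; apply/allP => j jt; have : j \in [set j in val t] by rewrite inE.
  by rewrite S'.
have S' : [set j in val t] = e :\ i.
  apply/eqP; rewrite eqEcard; apply/andP; split.
    by apply/subsetP => j; rewrite inE => /(allP t_e).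
  have -> : #|[set j in val t]| = size t by rewrite cardsE; exact/card_uniqP.
  by rewrite size_tuple.
apply/setP => j; transitivity (j \in i |: e :\ i); last by rewrite setD1K.
have jt : (j \in [set j in val t]) = (j \in e :\ i) by rewrite S'.
by rewrite inE in jt; rewrite inE in_cons in_setU1 jt.
Qed.

Lemma tapply_adj (x : 'I_n -> C) i : kuniform k E ->
  tapply k (adj_tensor C k E) x i = \sum_(e in E | i \in e) \prod_(j in e :\ i) x j.
Proof.
move=> unif; rewrite /tapply /adj_tensor.
set c := ((k.-1)`!%:R)^-1 : C.
transitivity (\sum_(t : (k.-1).-tuple 'I_n) \sum_(e in E | i \in e)
   (if [set j in i :: val t] == e then c * \prod_(j in e :\ i) x j else 0)).
  apply: eq_bigr => t _; rewrite /= size_tuple prednK // eqxx /=.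
  case: ifP => SE; last first.
    rewrite mul0r big1 // => e /andP[eE _].
    by case: eqP => // Se; rewrite Se eE in SE.
  rewrite (bigD1 [set j in i :: val t]) /=; last by rewrite SE inE mem_head.
  rewrite eqxx [X in _ + X]big1 ?addr0; last first.
    by move=> e /andP[_ ne]; rewrite eq_sym (negPf ne).
  have sz : (size t).+1 = k by rewrite size_tuple prednK.
  have [_ ut S'] := enum_edge_cons (erefl _) (etrans (unif _ SE) (esym sz)).
  by congr (_ * _); rewrite (big_uniq _ ut); apply: eq_bigl => j; rewrite -S' inE.
rewrite exchange_big /=; apply: eq_bigr => e /andP[eE ie].
rewrite -big_mkcond /= sumr_const card_edge_enums ?unif //.
by rewrite -mulr_natr mulrAC mulVf ?mul1r // pnatr_eq0 -lt0n fact_gt0.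
Qed.

Lemma hdeg_sum (w : C) i :
  (hdeg E i)%:R * w = \sum_(e in E | i \in e) w.
Proof. by rewrite mulr_natl /hdeg -sumr_const; apply: eq_bigl => e; rewrite inE. Qed.

(* The zero-eigenvalue equations of D - s A (s = 1: Laplacian, s = -1:
   signless Laplacian), after moving the adjacency part to the left. *)
Definition balanced (s : C) (x : 'I_n -> C) : Prop :=
  forall i, s * \sum_(e in E | i \in e) \prod_(j in e :\ i) x j =
            (hdeg E i)%:R * x i ^+ k.-1.

Lemma laplacian_kernelE (x : 'I_n -> C) : kuniform k E ->
  (forall i, tapply k (laplacian C k E) x i = 0 * x i ^+ k.-1) <-> balanced 1 x.
Proof.
move=> unif; have tapplyE i : tapply k (laplacian C k E) x i =
    (hdeg E i)%:R * x i ^+ k.-1 - \sum_(e in E | i \in e) \prod_(j in e :\ i) x j.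
  rewrite -tapply_deg -tapply_adj // /tapply -sumrB.
  by apply: eq_bigr => t _; rewrite mulrBl.
by split=> eq0 i; move: (eq0 i); rewrite tapplyE mul0r mul1r;
  [move/eqP; rewrite subr_eq0 => /eqP | move=> ->; rewrite subrr].
Qed.

Lemma signless_kernelE (x : 'I_n -> C) : kuniform k E ->
  (forall i, tapply k (signless_laplacian C k E) x i = 0 * x i ^+ k.-1) <->
  balanced (-1) x.
Proof.
move=> unif; have tapplyE i : tapply k (signless_laplacian C k E) x i =
    (hdeg E i)%:R * x i ^+ k.-1 + \sum_(e in E | i \in e) \prod_(j in e :\ i) x j.
  rewrite -tapply_deg -tapply_adj // /tapply -big_split.
  by apply: eq_bigr => t _; rewrite mulrDl.
by split=> eq0 i; move: (eq0 i); rewrite tapplyE mul0r mulN1r;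
  [move/eqP; rewrite addr_eq0 => /eqP -> | move=> <-; rewrite addNr].
Qed.

End TensorEvaluation.

Lemma connected_const n (E : {set {set 'I_n}}) (T : Type) (f : 'I_n -> T) :
  hconnected E ->
  (forall e, e \in E -> forall i j, i \in e -> j \in e -> f i = f j) ->
  forall i j, f i = f j.
Proof.
move=> conn f_edge i j; have [->//|ij] := eqVneq i j.
have [e1 [s [E_s ie1 j_last path_s]]] := conn i j ij; clear ij.
elim: s e1 i E_s ie1 j_last path_s => [|e2 s IHs] e1 i /= /andP[e1E E_s] ie1.
  by move=> je1 _; apply: f_edge e1E i j ie1 je1.
move=> j_last /andP[/set0Pn[c]]; rewrite inE => /andP[ce1 ce2] path_s.
by rewrite (f_edge e1 e1E i c ie1 ce1); apply: IHs E_s ce2 j_last path_s.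
Qed.

Lemma real_argmax (R : numDomainType) (I : finType) (f : I -> R) (i1 : I) :
  (forall i, f i \is Num.real) -> exists i0, forall i, f i <= f i0.
Proof.
move=> f_real.
suff [i0 max_i0] : exists i0, forall i, i \in enum I -> f i <= f i0.
  by exists i0 => i; apply: max_i0; rewrite mem_enum.
elim: (enum I) => [|a s [i0 IHs]]; first by exists i1.
have [le_a|lt_a] := real_leP (f_real a) (f_real i0).
  by exists i0 => i; rewrite in_cons => /orP[/eqP->|/IHs].
exists a => i; rewrite in_cons => /orP[/eqP->|/IHs le_i] //.
exact: le_trans le_i (ltW lt_a).
Qed.

Lemma prod_eq_bound (R : numDomainType) (I : finType) (A : {set I}) (f : I -> R) M :
  0 < M -> (forall l, l \in A -> 0 <= f l <= M) ->
  \prod_(l in A) f l = M ^+ #|A| -> forall l, l \in A -> f l = M.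
Proof.
move=> M_gt0 f_bnd prodA l lA; have /andP[fl_ge0 fl_le] := f_bnd l lA.
apply/eqP; rewrite eq_le fl_le /=; apply: contraT.
rewrite -(real_ltNge (ger0_real fl_ge0) (gtr0_real M_gt0)) => fl_lt.
move: prodA; rewrite (bigD1 l) //= (cardsD1 l A) lA /= exprS.
have rest_le : \prod_(j in A | j != l) f j <= M ^+ #|A :\ l|.
  have -> : #|A :\ l| = #|[pred j in A | j != l]|.
    by apply: eq_card => j; rewrite !inE andbC.
  by rewrite -prodr_const; apply: ler_prod => j /andP[jA _]; apply: f_bnd.
have : f l * \prod_(j in A | j != l) f j < M * M ^+ #|A :\ l|.
  apply: (@le_lt_trans _ _ (f l * M ^+ #|A :\ l|)); first by rewrite ler_wpM2l.
  by rewrite ltr_pM2r // exprn_gt0.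
by move=> lt_prod eq_prod; move: lt_prod; rewrite eq_prod ltxx.
Qed.

Lemma sum_eq_bounded_terms (C : numClosedFieldType) (I : finType) (P : pred I)
    (z : I -> C) (w : C) :
  w != 0 -> (forall e, P e -> `|z e| <= `|w|) ->
  \sum_(e | P e) z e = \sum_(e | P e) w -> forall e, P e -> z e = w.
Proof.
move=> w_neq0 z_le sum_eq e Pe.
have wc_neq0 : w^* != 0 by rewrite conjC_eq0.
apply: (mulIf wc_neq0).
apply: (@normC_sum_upper _ _ P (fun e => z e * w^*) (fun _ => w * w^*)) => //.
  move=> i Pi; rewrite -normCK normrM norm_conjC expr2.
  by rewrite ler_wpM2r // z_le.
by rewrite -!mulr_suml sum_eq.
Qed.

Section ForwardDirection.
Variables (C : numClosedFieldType) (n k : nat) (E : {set {set 'I_n}}).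
Hypotheses (k_gt1 : (1 < k)%N) (unif : kuniform k E) (conn : hconnected E).
Variables (s : C) (x : 'I_n -> C).
Hypotheses (s_sqr : s ^+ 2 = 1) (bal : balanced k E s x).

Let k_gt0 : (0 < k)%N := ltnW k_gt1.
Let norm_s : `|s| = 1 := norm_unity_root (isT : (0 < 2)%N) s_sqr.

Let card_edgeD1 e i : e \in E -> i \in e -> #|e :\ i| = k.-1.
Proof. by move=> eE ie; move: (unif eE); rewrite (cardsD1 i) ie => <-. Qed.

Variable i0 : 'I_n.
Hypotheses (max_i0 : forall i, `|x i| <= `|x i0|) (x_i0_neq0 : x i0 != 0).
Local Notation M := `|x i0|.

(* At a vertex i of maximal modulus the balance equation at i is an equality
   case of the triangle inequality: every edge term equals x_i^(k-1), which
   forces all vertices of these edges to have maximal modulus too. *)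
Lemma max_modulus_edge i e : `|x i| = M -> e \in E -> i \in e ->
  s * \prod_(j in e :\ i) x j = x i ^+ k.-1 /\ forall j, j \in e -> `|x j| = M.
Proof.
move=> xiM eE ie; have M_gt0 : 0 < M by rewrite normr_gt0.
have xi_neq0 : x i != 0 by rewrite -normr_gt0 xiM.
have norm_term e' : e' \in E -> i \in e' ->
    `|s * \prod_(j in e' :\ i) x j| = \prod_(j in e' :\ i) `|x j|.
  by move=> _ _; rewrite normrM norm_s mul1r normr_prod.
have term_le e' : (e' \in E) && (i \in e') ->
    `|s * \prod_(j in e' :\ i) x j| <= `|x i ^+ k.-1|.
  case/andP=> e'E ie'; rewrite norm_term // normrX xiM -(card_edgeD1 e'E ie').
  by rewrite -prodr_const; apply: ler_prod => j _; rewrite normr_ge0 max_i0.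
have edge_eq : s * \prod_(j in e :\ i) x j = x i ^+ k.-1.
  apply: (sum_eq_bounded_terms (expf_neq0 _ xi_neq0) term_le); last by rewrite eE.
  by rewrite -mulr_sumr bal hdeg_sum.
split=> // j je; have [->//|ji] := eqVneq j i.
apply: (@prod_eq_bound _ _ (e :\ i) (fun j => `|x j|) M) => //.
- by move=> l _; rewrite normr_ge0 max_i0.
- by rewrite -norm_term // edge_eq normrX xiM (card_edgeD1 eE ie).
- by rewrite !inE ji.
Qed.

Lemma max_modulus_everywhere i : `|x i| = M.
Proof.
apply/eqP; rewrite (@connected_const n E _ (fun i => `|x i| == M) conn _ i i0) //.
move=> e eE a b ae be /=.
have [xaM|xa_neqM] := eqVneq `|x a| M.
  by rewrite ((max_modulus_edge xaM eE ae).2 b be) eqxx.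
have [xbM|//] := eqVneq `|x b| M.
by move: xa_neqM; rewrite ((max_modulus_edge xbM eE be).2 a ae) eqxx.
Qed.

Lemma edge_product e i : e \in E -> i \in e -> s * \prod_(j in e) x j = x i ^+ k.
Proof.
move=> eE ie; rewrite (big_setD1 i ie) /= mulrCA.
by rewrite (max_modulus_edge (max_modulus_everywhere i) eE ie).1 -exprS prednK.
Qed.

(* Hence x_i^k does not depend on i, and x_i / x_i0 is a k-th root of unity. *)
Lemma forward_exponents : exists a : 'I_n -> int,
  (forall i, x i = x i0 * expik C k (a i)) /\
  forall e, e \in E -> expik C k (\sum_(j in e) a j) = s.
Proof.
have expk_const i j : x i ^+ k = x j ^+ k.
  apply: (@connected_const n E C (fun i => x i ^+ k) conn) => e eE a b ae be.
  by rewrite -(edge_product eE ae) -(edge_product eE be).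
have ratio_root i : (x i / x i0) ^+ k = 1.
  by rewrite expr_div_n (expk_const i i0) divff // expf_neq0.
pose a i := Posz (val (sval (prim_rootP (expik_prim C k_gt1) (ratio_root i)))).
have xa i : x i = x i0 * expik C k (a i).
  rewrite /a /expik -exprnP; case: (prim_rootP _ _) => j /= <-.
  by rewrite mulrC divfK.
exists a; split=> // e eE; have [i ie] : exists i, i \in e.
  by apply/set0Pn; rewrite -card_gt0 (unif eE).
have := edge_product eE ie; rewrite (expk_const i i0) (eq_bigr _ (fun j _ => xa j)).
rewrite big_split /= prodr_const (unif eE) prod_expik // mulrCA => prod_eq.
have s_expik : s * expik C k (\sum_(j in e) a j) = 1.
  by apply: (mulIf (expf_neq0 k x_i0_neq0)); rewrite mul1r mulrC.
by rewrite -[LHS]mul1r -s_sqr expr2 -mulrA s_expik mulr1.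
Qed.

End ForwardDirection.

Lemma balanced_backward (C : numClosedFieldType) n k (E : {set {set 'I_n}})
    (s : C) (x : 'I_n -> C) (g : C) (a : 'I_n -> int) :
  (1 < k)%N -> kuniform k E -> s ^+ 2 = 1 -> g != 0 ->
  (forall i, x i = g * expik C k (a i)) ->
  (forall e, e \in E -> expik C k (\sum_(j in e) a j) = s) ->
  balanced k E s x.
Proof.
move=> k_gt1 unif s_sqr g_neq0 xa edge_a i; rewrite mulr_sumr hdeg_sum.
apply: eq_bigr => e /andP[eE ie].
have xi_neq0 : x i != 0 by rewrite xa mulf_neq0 ?expik_neq0.
apply: (mulfI xi_neq0); rewrite mulrCA -(big_setD1 i ie) /=.
rewrite (eq_bigr _ (fun j _ => xa j)) big_split /= prodr_const (unif _ eE).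
rewrite prod_expik // edge_a // mulrCA -expr2 s_sqr mulr1.
by rewrite -exprS prednK ?(ltnW k_gt1) // xa exprMn expik_expk // mulr1.
Qed.

Lemma balancedP (C : numClosedFieldType) n k (E : {set {set 'I_n}})
    (s : C) (x : 'I_n -> C) :
  (1 < k)%N -> kuniform k E -> hconnected E -> s ^+ 2 = 1 ->
  (exists i, x i != 0) ->
  balanced k E s x <->
  exists (g : C) (a : 'I_n -> int),
    [/\ g != 0, forall i, x i = g * expik C k (a i) &
        forall e, e \in E -> expik C k (\sum_(j in e) a j) = s].
Proof.
move=> k_gt1 unif conn s_sqr [i1 x_i1_neq0]; split; last first.
  by case=> g [a [g_neq0 xa edge_a]]; apply: balanced_backward xa edge_a.
move=> bal; have [i0 max_i0] := real_argmax i1 (fun i => normr_real (x i)).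
have x_i0_neq0 : x i0 != 0.
  by rewrite -normr_gt0 (lt_le_trans _ (max_i0 i1)) ?normr_gt0.
have [a [xa edge_a]] := forward_exponents k_gt1 unif conn s_sqr bal max_i0 x_i0_neq0.
by exists (x i0), a.
Qed.

Lemma eigenvector0E (C : numClosedFieldType) n k (T : tensor C n) (x : 'I_n -> C) :
  (exists i, x i != 0) ->
  is_eigenvector k T x 0 <-> forall i, tapply k T x i = 0 * x i ^+ k.-1.
Proof. by move=> x_neq0; split=> [[]|]. Qed.

Unset Implicit Arguments.

Theorem theorem4p1 (C : numClosedFieldType) (n k : nat)
    (E : {set {set 'I_n}}) :
  (3 <= k)%N -> kuniform k E -> hconnected E -> E != set0 ->
  (forall x : 'I_n -> C, (exists i, x i != 0) ->
     (is_eigenvector k (laplacian C k E) x 0 <->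
      exists (g : C) (a : 'I_n -> int),
        [/\ g != 0, (forall i, x i = g * expik C k (a i)) &
            forall e, e \in E -> exists s : int,
              \sum_(j in e) a j = s * k%:Z]))
  /\
  (forall x : 'I_n -> C, (exists i, x i != 0) ->
     (is_eigenvector k (signless_laplacian C k E) x 0 <->
      exists (g : C) (a : 'I_n -> int),
        [/\ g != 0, (forall i, x i = g * expik C k (a i)) &
            forall e, e \in E -> exists s : int,
              ((\sum_(j in e) a j)%:~R : rat) = s%:~R * k%:R + k%:R / 2])).
Proof.
move=> k_ge3 unif conn _; have k_gt1 : (1 < k)%N := ltnW k_ge3.
split=> x x_neq0; apply: (iff_trans (eigenvector0E _ _ x_neq0)).
  apply: (iff_trans (laplacian_kernelE (ltnW k_gt1) x unif)).
  apply: (iff_trans (balancedP k_gt1 unif conn (expr1n _ _) x_neq0)).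
  by split=> -[g [a [g_neq0 xa edge_a]]]; exists g, a; split=> // e eE;
    apply/(expik_eq1 C k_gt1)/edge_a.
apply: (iff_trans (signless_kernelE (ltnW k_gt1) x unif)).
apply: (iff_trans (balancedP k_gt1 unif conn (etrans (sqrrN 1) (expr1n _ 2)) x_neq0)).
by split=> -[g [a [g_neq0 xa edge_a]]]; exists g, a; split=> // e eE;
  apply/(expik_eqN1 C k_gt1)/edge_a.
Qed.
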